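(* In an MFQST with degree bound $\phi=3$, every Steiner point has degree exactly $3$.
   Context: Let $Z=\{z_1,\dots,z_n\}\subset\mathbb{R}^2$ ($n\ge 1$) be a set of sources and $z_{BS}\in\mathbb{R}^2\setminus Z$ a sink; each source has supply $1$. A flow-dependent quadratic Steiner tree (FQST) consists of a finite set $S\subset\mathbb{R}^2$ of Steiner points and a tree $T$ with vertex set $Z\cup S\cup\{z_{BS}\}$ whose edges are directed towards $z_{BS}$. Every node other than the sink has exactly one out-edge, and the sink has none. Each edge $e$ carries a positive flow $f(e)$ such that: - at each source, the flow on its out-edge minus the total flow on its in-edges equals $1$; - at each Steiner point, the out-flow equals the total in-flow; - the sink receives total flow $n$. The cost is $L(T)=\sum_{e\in E(T)} f(e)|e|^2$. An MFQST with degree bound $\phi$ is an FQST minimising $L$ among all FQSTs (any finite $S$, any topology) in which every Steiner point has degree at least $\phi$. *)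

From Stdlib Require Import Reals Lra Lia List Arith.
Import ListNotations.
Open Scope R_scope.

(* Node numbering for an FQST with n sources and m Steiner points:
     0 .. n-1         : sources z_1..z_n
     n .. n+m-1       : Steiner points
     n+m              : the sink z_BS.
   Every non-sink node v has exactly one out-edge v -> par v; the edge is
   identified with its tail v and carries flow (flow v). *)

Definition point := (R * R)%type.

Definition sqdist (p q : point) : R :=
  (fst p - fst q) ^ 2 + (snd p - snd q) ^ 2.

Record FQST := mkFQST {
  nst  : nat;
  spt  : nat -> point;
  par  : nat -> nat;
  flow : nat -> R
}.

Section FQSTDefs.
Variables (n : nat) (z : nat -> point) (zBS : point).

Definition sinkIdx (T : FQST) : nat := (n + nst T)%nat.

Definition pos (T : FQST) (v : nat) : point :=
  if Nat.ltb v n then z v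
  else if Nat.ltb v (sinkIdx T) then spt T (v - n)
  else zBS.

Definition children (T : FQST) (v : nat) : list nat :=
  filter (fun u => Nat.eqb (par T u) v) (seq 0 (sinkIdx T)).

Definition inflow (T : FQST) (v : nat) : R :=
  fold_right Rplus 0 (map (flow T) (children T v)).

(* degree of a non-sink node: its in-edges plus its single out-edge *)
Definition degree (T : FQST) (v : nat) : nat :=
  S (length (children T v)).

Definition is_FQST (T : FQST) : Prop :=
  (forall u v, (u <= sinkIdx T)%nat -> (v <= sinkIdx T)%nat ->
     pos T u = pos T v -> u = v) /\
  (forall v, (v < sinkIdx T)%nat -> (par T v <= sinkIdx T)%nat /\ par T v <> v) /\
  (* T is a tree directed towards the sink: following out-edges
     from any node reaches the sink *)
  (forall v, (v < sinkIdx T)%nat -> exists k, Nat.iter k (par T) v = sinkIdx T) /\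
  (forall v, (v < sinkIdx T)%nat -> 0 < flow T v) /\
  (forall v, (v < n)%nat -> flow T v - inflow T v = 1) /\
  (forall v, (n <= v < sinkIdx T)%nat -> flow T v = inflow T v) /\
  inflow T (sinkIdx T) = INR n.

Definition cost (T : FQST) : R :=
  fold_right Rplus 0
    (map (fun v => flow T v * sqdist (pos T v) (pos T (par T v)))
         (seq 0 (sinkIdx T))).

Definition steiner_deg_ge (phi : nat) (T : FQST) : Prop :=
  forall v, (n <= v < sinkIdx T)%nat -> (phi <= degree T v)%nat.

Definition is_MFQST (phi : nat) (T : FQST) : Prop :=
  is_FQST T /\ steiner_deg_ge phi T /\
  forall T', is_FQST T' -> steiner_deg_ge phi T' -> cost T <= cost T'.

End FQSTDefs.

From Pilot Require Import Defs.
From Stdlib Require Import Reals List Arith Lra Lia.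
Import ListNotations.
(* Re-import so that [pos] denotes node positions, not the posreal projection. *)
Import Defs.
Open Scope R_scope.

(* Let v be a Steiner
   point of a minimum tree with degree >= 4, i.e. with at least three
   children, at position s.  For a child c put w_c = f(c) (p_c - s).  Some
   two children c1, c2 have w = w_c1 + w_c2 <> 0: if all three pairwise sums
   vanished then w_c = 0 for a child c, i.e. p_c = s, which is impossible.
   Insert a new Steiner point at x = s + t w, route c1 and c2 into x and x
   into v with flow f(c1) + f(c2).  The cost changes by exactly
   2 t |w|^2 (t (f(c1) + f(c2)) - 1) < 0 for small t > 0; the new point has
   degree 3, v loses one in-edge and keeps degree >= 3, and for small t the
   point x differs from every vertex.  This contradicts minimality. *)

Definition Rsum (l : list nat) (f : nat -> R) : R := fold_right Rplus 0 (map f l).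

Lemma Rsum_app l1 l2 f : Rsum (l1 ++ l2) f = Rsum l1 f + Rsum l2 f.
Proof. unfold Rsum; induction l1; simpl; [lra | rewrite IHl1; lra]. Qed.

Lemma Rsum_cons a l f : Rsum (a :: l) f = f a + Rsum l f.
Proof. reflexivity. Qed.

Lemma Rsum_one a f : Rsum [a] f = f a.
Proof. unfold Rsum; simpl; lra. Qed.

Lemma Rsum_ext_in l f g : (forall u, In u l -> f u = g u) -> Rsum l f = Rsum l g.
Proof.
  unfold Rsum; induction l; simpl; intros H; auto.
  rewrite H, IHl by auto; reflexivity.
Qed.

Lemma Rsum_ext_seq m f g : (forall u, (u < m)%nat -> f u = g u) ->
  Rsum (seq 0 m) f = Rsum (seq 0 m) g.
Proof. intros H. apply Rsum_ext_in. intros u Hu. apply in_seq in Hu. apply H; lia. Qed.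

Lemma Rsum_plus l f g : Rsum l (fun u => f u + g u) = Rsum l f + Rsum l g.
Proof. unfold Rsum; induction l; simpl; [lra | rewrite IHl; lra]. Qed.

Lemma Rsum_minus l f g : Rsum l (fun u => f u - g u) = Rsum l f - Rsum l g.
Proof. unfold Rsum; induction l; simpl; [lra | rewrite IHl; lra]. Qed.

Lemma Rsum_delta_notin l c f : ~ In c l -> Rsum l (fun u => if u =? c then f u else 0) = 0.
Proof.
  induction l as [|a l IH]; intros H; [reflexivity|].
  rewrite Rsum_cons. destruct (Nat.eqb_spec a c) as [->|_]; [exfalso; apply H; left; auto|].
  rewrite IH; [lra | intro; apply H; right; auto].
Qed.

Lemma Rsum_delta l c f : NoDup l -> In c l -> Rsum l (fun u => if u =? c then f u else 0) = f c.
Proof.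
  induction l as [|a l IH]; intros Hnd Hin; [contradiction|].
  inversion Hnd as [|? ? Ha Hl]; subst.
  rewrite Rsum_cons. destruct (Nat.eqb_spec a c) as [<-|Hac].
  - rewrite Rsum_delta_notin by assumption; lra.
  - destruct Hin as [|Hin]; [contradiction|]. rewrite IH by assumption; lra.
Qed.

Lemma Rsum_delta_seq m c f : (c < m)%nat ->
  Rsum (seq 0 m) (fun u => if u =? c then f u else 0) = f c.
Proof. intros Hc. apply Rsum_delta; [apply seq_NoDup | apply in_seq; lia]. Qed.

Lemma Rsum_filter (p : nat -> bool) f l :
  Rsum (filter p l) f = Rsum l (fun u => if p u then f u else 0).
Proof. unfold Rsum; induction l; simpl; auto. destruct (p a); simpl; rewrite IHl; lra. Qed.

Lemma length_Rsum l : INR (length l) = Rsum l (fun _ => 1).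
Proof.
  induction l as [|a l IH]; [reflexivity|].
  rewrite Rsum_cons, <- IH; cbn [length]; rewrite S_INR; lra.
Qed.

Lemma list_pos_lower_bound (l : list nat) (g : nat -> R) :
  (forall u, In u l -> 0 < g u) -> exists e, 0 < e /\ forall u, In u l -> e <= g u.
Proof.
  induction l as [|a l IH]; simpl; intros H.
  - exists 1; split; [lra | intros _ []].
  - destruct IH as [e [He Hl]]; auto.
    exists (Rmin e (g a)); split; [apply Rmin_glb_lt; auto|].
    intros u [<-|Hu]; [apply Rmin_r | eapply Rle_trans; [apply Rmin_l | auto]].
Qed.

Lemma Rsum_children n T w f :
  Rsum (children n T w) f = Rsum (seq 0 (sinkIdx n T)) (fun u => if par T u =? w then f u else 0).
Proof. apply Rsum_filter. Qed.

Lemma Rsum_children_ext n T w f g :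
  (forall u, (u < sinkIdx n T)%nat -> f u = g u) ->
  Rsum (children n T w) f = Rsum (children n T w) g.
Proof.
  intros H. rewrite !Rsum_children. apply Rsum_ext_seq.
  intros u Hu. rewrite H by assumption. reflexivity.
Qed.

Lemma sqdist_pos p q : p <> q -> 0 < sqdist p q.
Proof.
  destruct p as [a b], q as [c d]; unfold sqdist; cbn [fst snd]; intros H.
  rewrite <- !Rsqr_pow2. pose proof (Rle_0_sqr (a - c)); pose proof (Rle_0_sqr (b - d)).
  destruct (Req_dec a c) as [->|Hac].
  - assert (Hbd : b - d <> 0) by (intro; apply H; f_equal; lra).
    pose proof (Rsqr_pos_lt _ Hbd); lra.
  - assert (Hac' : a - c <> 0) by lra.
    pose proof (Rsqr_pos_lt _ Hac'); lra.
Qed.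

Definition pull (f1 f2 : R) (p1 p2 s : point) : point :=
  (f1 * (fst p1 - fst s) + f2 * (fst p2 - fst s),
   f1 * (snd p1 - snd s) + f2 * (snd p2 - snd s)).

Definition shift (s : point) (t : R) (w : point) : point :=
  (fst s + t * fst w, snd s + t * snd w).

Definition origin : point := (0, 0).

Lemma sqdist_shift s t w : sqdist (shift s t w) s = t * t * sqdist w origin.
Proof. unfold sqdist, shift, origin; simpl; ring. Qed.

Lemma detour_cost_change f1 f2 p1 p2 s t :
  let w := pull f1 f2 p1 p2 s in
  f1 * (sqdist p1 (shift s t w) - sqdist p1 s) + f2 * (sqdist p2 (shift s t w) - sqdist p2 s)
  + (f1 + f2) * sqdist (shift s t w) s
  = 2 * t * sqdist w origin * (t * (f1 + f2) - 1).
Proof. unfold pull, shift, sqdist, origin; simpl; ring. Qed.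

Lemma detour_saves f1 f2 p1 p2 s t :
  let w := pull f1 f2 p1 p2 s in
  w <> origin -> 0 < t -> t * (f1 + f2) < 1 ->
  f1 * (sqdist p1 (shift s t w) - sqdist p1 s) + f2 * (sqdist p2 (shift s t w) - sqdist p2 s)
  + (f1 + f2) * sqdist (shift s t w) s < 0.
Proof.
  intros w Hw Ht HtF. unfold w; rewrite detour_cost_change; fold w.
  assert (Hgain : 0 < 2 * t * sqdist w origin * (1 - t * (f1 + f2))).
  { pose proof (sqdist_pos _ _ Hw). repeat apply Rmult_lt_0_compat; lra. }
  lra.
Qed.

Lemma point_eq_dec (p q : point) : {p = q} + {p <> q}.
Proof.
  destruct p as [a b], q as [c d].
  destruct (Req_EM_T a c) as [<-|Hac]; [|right; congruence].
  destruct (Req_EM_T b d) as [<-|Hbd]; [left; reflexivity | right; congruence].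
Qed.

(* Three children with positive flows cannot all pairwise exert zero pull on
   s, unless one of them sits at s: the three equations force w_a = 0. *)
Lemma pulls_not_all_zero fa fb fc pa pb pc s :
  0 < fa -> pa <> s ->
  pull fa fb pa pb s = origin -> pull fa fc pa pc s = origin -> pull fb fc pb pc s = origin ->
  False.
Proof.
  unfold pull, origin; intros Hfa Hpa E1 E2 E3.
  injection E1 as E1x E1y; injection E2 as E2x E2y; injection E3 as E3x E3y.
  apply Hpa. destruct pa as [a b], s as [c d]; simpl in *.
  assert (fa * (a - c) = 0) by lra. assert (fa * (b - d) = 0) by lra.
  f_equal; nra.
Qed.

Lemma fresh_shift (P : nat -> point) (m v : nat) (w : point) (F : R) :
  (forall u, (u <= m)%nat -> u <> v -> P u <> P v) -> w <> origin -> 0 < F ->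
  exists t, 0 < t /\ t * F < 1 /\ forall u, (u <= m)%nat -> P u <> shift (P v) t w.
Proof.
  intros Hsep Hw HF.
  pose proof (sqdist_pos _ _ Hw) as HD. set (D := sqdist w origin) in *.
  destruct (list_pos_lower_bound (seq 0 (S m))
              (fun u => if u =? v then 1 else sqdist (P u) (P v))) as [e [He Hle]].
  { intros u Hu. apply in_seq in Hu. destruct (Nat.eqb_spec u v); [lra|].
    apply sqdist_pos, Hsep; [lia | assumption]. }
  set (t := Rmin (/ (2 * F)) (Rmin 1 (e / (2 * D)))).
  assert (Ht1 : t <= / (2 * F)) by apply Rmin_l.
  assert (Ht2 : t <= 1) by (eapply Rle_trans; [apply Rmin_r | apply Rmin_l]).
  assert (Ht3 : t <= e / (2 * D)) by (eapply Rle_trans; [apply Rmin_r | apply Rmin_r]).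
  assert (Ht0 : 0 < t).
  { apply Rmin_glb_lt; [apply Rinv_0_lt_compat; lra|].
    apply Rmin_glb_lt; [lra | apply Rdiv_lt_0_compat; lra]. }
  assert (HtF : t * F <= / 2).
  { replace (/ 2) with (/ (2 * F) * F) by (field; lra). apply Rmult_le_compat_r; lra. }
  assert (HtD : t * t * D <= e / 2).
  { assert (t * t <= t) by nra.
    replace (e / 2) with (e / (2 * D) * D) by (field; lra).
    apply Rmult_le_compat_r; lra. }
  exists t; split; [assumption | split; [lra|]].
  intros u Hu Heq.
  assert (Hd : sqdist (P u) (P v) = t * t * D) by (rewrite Heq; apply sqdist_shift).
  specialize (Hle u ltac:(apply in_seq; lia)); cbv beta in Hle.
  destruct (Nat.eqb_spec u v) as [Euv|_].
  - subst u. unfold sqdist in Hd.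
    assert (0 < t * t * D) by (repeat apply Rmult_lt_0_compat; lra). lra.
  - lra.
Qed.

Lemma two_children_with_pull n z zBS T v :
  is_FQST n z zBS T -> (v < sinkIdx n T)%nat -> (3 <= length (children n T v))%nat ->
  exists c1 c2, (c1 < sinkIdx n T)%nat /\ (c2 < sinkIdx n T)%nat /\
    par T c1 = v /\ par T c2 = v /\ c1 <> c2 /\
    pull (flow T c1) (flow T c2) (pos n z zBS T c1) (pos n z zBS T c2) (pos n z zBS T v)
      <> origin.
Proof.
  intros HT Hv Hlen. destruct HT as [Hinj [Hpar [_ [Hflow _]]]].
  assert (Hch : forall a, In a (children n T v) -> (a < sinkIdx n T)%nat /\ par T a = v).
  { intros a Ha. apply filter_In in Ha as [Ha Pa].
    apply in_seq in Ha. apply Nat.eqb_eq in Pa. split; [lia | assumption]. }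
  assert (Hnd : NoDup (children n T v)) by apply NoDup_filter, seq_NoDup.
  destruct (children n T v) as [|a [|b [|c rest]]]; cbn [length] in Hlen; try lia.
  destruct (Hch a) as [Ha Pa]; [simpl; auto|].
  destruct (Hch b) as [Hb Pb]; [simpl; auto|].
  destruct (Hch c) as [Hc Pc]; [simpl; auto|].
  apply NoDup_cons_iff in Hnd as [Na Hnd]. apply NoDup_cons_iff in Hnd as [Nb _].
  assert (Hpa : pos n z zBS T a <> pos n z zBS T v).
  { intro E. apply Hinj in E; try lia. destruct (Hpar a Ha). congruence. }
  set (p := pos n z zBS T).
  destruct (point_eq_dec (pull (flow T a) (flow T b) (p a) (p b) (p v)) origin) as [Zab|];
    [|exists a, b; repeat split; auto; intro; subst; apply Na; simpl; auto].
  destruct (point_eq_dec (pull (flow T a) (flow T c) (p a) (p c) (p v)) origin) as [Zac|];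
    [|exists a, c; repeat split; auto; intro; subst; apply Na; simpl; auto].
  destruct (point_eq_dec (pull (flow T b) (flow T c) (p b) (p c) (p v)) origin) as [Zbc|];
    [|exists b, c; repeat split; auto; intro; subst; apply Nb; simpl; auto].
  exfalso. exact (pulls_not_all_zero _ _ _ _ _ _ _ (Hflow a Ha) Hpa Zab Zac Zbc).
Qed.

(* Given children c1 <> c2 of a non-sink node v
   and a point x, the new tree keeps all old nodes, turns the old sink index
   into a new Steiner point at x, and moves the sink one index up.  The
   children c1, c2 now feed x, which feeds v with flow f(c1) + f(c2). *)
Section Splitting.
Variables (n : nat) (z : nat -> point) (zBS : point) (T : FQST).
Variables (v c1 c2 : nat) (x : point).

Local Notation NN := (sinkIdx n T).

Definition split_par (u : nat) : nat :=
  if orb (u =? c1) (u =? c2) then NN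
  else if u =? NN then v
  else if par T u =? NN then S NN else par T u.

Definition split_flow (u : nat) : R :=
  if u =? NN then flow T c1 + flow T c2 else flow T u.

Definition split_spt (i : nat) : point := if i =? nst T then x else spt T i.

Definition split_tree : FQST := mkFQST (S (nst T)) split_spt split_par split_flow.

Local Notation T' := split_tree.

Hypothesis HT : is_FQST n z zBS T.
Hypothesis Hv : (v < NN)%nat.
Hypothesis Hc1 : (c1 < NN)%nat.
Hypothesis Hc2 : (c2 < NN)%nat.
Hypothesis Hp1 : par T c1 = v.
Hypothesis Hp2 : par T c2 = v.
Hypothesis H12 : c1 <> c2.

Lemma split_sink : sinkIdx n T' = S NN.
Proof. unfold sinkIdx; simpl; lia. Qed.

Lemma par_bound u : (u < NN)%nat -> (par T u <= NN)%nat /\ par T u <> u.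
Proof. destruct HT as [_ [H _]]. apply H. Qed.

Lemma split_par_sink : split_par NN = v.
Proof.
  unfold split_par.
  destruct (Nat.eqb_spec NN c1); [lia|]. destruct (Nat.eqb_spec NN c2); [lia|].
  simpl. now rewrite Nat.eqb_refl.
Qed.

Lemma split_par_cases u : (u < NN)%nat ->
  ((u = c1 \/ u = c2) /\ split_par u = NN) \/
  (u <> c1 /\ u <> c2 /\ par T u = NN /\ split_par u = S NN) \/
  (u <> c1 /\ u <> c2 /\ (par T u < NN)%nat /\ split_par u = par T u).
Proof.
  intros Hu. unfold split_par.
  destruct (Nat.eqb_spec u c1); [left; auto|].
  destruct (Nat.eqb_spec u c2); [left; auto|]. simpl.
  destruct (Nat.eqb_spec u NN); [lia|].
  destruct (Nat.eqb_spec (par T u) NN); [right; left; auto|].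
  right; right. destruct (par_bound u Hu). repeat split; auto; lia.
Qed.

Lemma split_pos u : (u <= S NN)%nat ->
  pos n z zBS T' u = if u =? NN then x else pos n z zBS T (if u =? S NN then NN else u).
Proof.
  intros Hu. unfold pos. rewrite split_sink. unfold split_tree, split_spt, sinkIdx in *.
  cbn [spt nst] in *.
  repeat match goal with
  | |- context [?a =? ?b] => destruct (Nat.eqb_spec a b)
  | |- context [?a <? ?b] => destruct (Nat.ltb_spec a b)
  end; subst; try reflexivity; lia.
Qed.
Ltac decide_eqb :=
  repeat match goal with |- context [?a =? ?b] => destruct (Nat.eqb_spec a b) end.

Lemma split_child_indicator f w u : (u < NN)%nat ->
  (if split_par u =? w then f u else 0) =
  if w =? NN then (if u =? c1 then f u else 0) + (if u =? c2 then f u else 0)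
  else if w =? S NN then (if par T u =? NN then f u else 0)
  else if w =? v then (if par T u =? v then f u else 0)
                      - (if u =? c1 then f u else 0) - (if u =? c2 then f u else 0)
  else (if par T u =? w then f u else 0).
Proof.
  intros Hu.
  assert (v <> c1) by (intros ->; destruct (par_bound c1 Hc1); congruence).
  assert (v <> c2) by (intros ->; destruct (par_bound c2 Hc2); congruence).
  destruct (split_par_cases u Hu) as [[[-> | ->] ->] | [[? [? [E ->]]] | [? [? [E ->]]]]];
    rewrite ?Hp1, ?Hp2, ?E; decide_eqb; subst; try lia; lra.
Qed.

Lemma split_children_sum f w :
  Rsum (children n T' w) f =
  if w =? NN then f c1 + f c2
  else if w =? S NN then Rsum (children n T NN) f
  else if w =? v then Rsum (children n T v) f - f c1 - f c2 + f NN
  else Rsum (children n T w) f.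
Proof.
  rewrite !Rsum_children, split_sink, seq_S, Rsum_app, Rsum_one, Nat.add_0_l.
  cbn [par T']. rewrite split_par_sink.
  rewrite (Rsum_ext_seq NN (fun u => if split_par u =? w then f u else 0) _
             (fun u => split_child_indicator f w u)).
  destruct (Nat.eqb_spec w NN) as [->|];
    [rewrite Rsum_plus, !Rsum_delta_seq by assumption; decide_eqb; lia || lra|].
  destruct (Nat.eqb_spec w (S NN)) as [->|]; [decide_eqb; lia || lra|].
  destruct (Nat.eqb_spec w v) as [->|];
    [rewrite !Rsum_minus, !Rsum_delta_seq by assumption; rewrite Nat.eqb_refl; lra|].
  destruct (Nat.eqb_spec v w); [lia | lra].
Qed.
Lemma split_flow_old u : (u < NN)%nat -> split_flow u = flow T u.
Proof. intros Hu. unfold split_flow. destruct (Nat.eqb_spec u NN); [lia | reflexivity]. Qed.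

Lemma split_inflow w :
  inflow n T' w =
  if w =? NN then flow T c1 + flow T c2 else inflow n T (if w =? S NN then NN else w).
Proof.
  change (inflow n T' w) with (Rsum (children n T' w) split_flow).
  rewrite split_children_sum.
  assert (Hold : forall w', Rsum (children n T w') split_flow = inflow n T w')
    by (intro; apply Rsum_children_ext, split_flow_old).
  rewrite !Hold, !split_flow_old by assumption.
  destruct (Nat.eqb_spec w NN); [reflexivity|].
  destruct (Nat.eqb_spec w (S NN)); [reflexivity|].
  destruct (Nat.eqb_spec w v) as [->|]; [|reflexivity].
  unfold split_flow; rewrite Nat.eqb_refl; lra.
Qed.

Lemma split_steiner_degree :
  steiner_deg_ge n 3 T -> (3 <= length (children n T v))%nat -> steiner_deg_ge n 3 T'.
Proof.
  intros Hdeg Hcnt w Hw. rewrite split_sink in Hw. unfold degree.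
  enough (2 <= length (children n T' w))%nat by lia.
  apply INR_le. rewrite length_Rsum, split_children_sum, <- !length_Rsum.
  replace (INR 2) with 2 by (simpl; lra).
  destruct (Nat.eqb_spec w NN); [lra|].
  destruct (Nat.eqb_spec w (S NN)); [lia|].
  destruct (Nat.eqb_spec w v) as [->|].
  - apply le_INR in Hcnt. replace (INR 3) with 3 in Hcnt by (simpl; lra). lra.
  - specialize (Hdeg w ltac:(lia)). unfold degree in Hdeg.
    replace 2 with (INR 2) by (simpl; lra). apply le_INR. lia.
Qed.

Lemma split_reaches_sink k : forall u, (u < NN)%nat -> Nat.iter k (par T) u = NN ->
  exists k', Nat.iter k' split_par u = S NN.
Proof.
  induction k as [|k IH]; intros u Hu Hk; [simpl in Hk; lia|].
  rewrite Nat.iter_succ_r in Hk.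
  destruct (split_par_cases u Hu) as [[[-> | ->] E] | [[_ [_ [_ E]]] | [_ [_ [Hlt E]]]]].
  - rewrite Hp1 in Hk. destruct (IH v Hv Hk) as [k' Hk'].
    exists (S (S k')). rewrite !Nat.iter_succ_r, E, split_par_sink. exact Hk'.
  - rewrite Hp2 in Hk. destruct (IH v Hv Hk) as [k' Hk'].
    exists (S (S k')). rewrite !Nat.iter_succ_r, E, split_par_sink. exact Hk'.
  - exists 1%nat. exact E.
  - destruct (IH (par T u) Hlt Hk) as [k' Hk'].
    exists (S k'). rewrite Nat.iter_succ_r, E. exact Hk'.
Qed.

Lemma split_is_FQST :
  (forall u, (u <= NN)%nat -> pos n z zBS T u <> x) -> is_FQST n z zBS T'.
Proof.
  intros Hx. pose proof HT as [Hinj [Hpar [Hreach [Hflow [Hsrc [Hst Hsink]]]]]].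
  assert (HnN : (n <= NN)%nat) by (unfold sinkIdx; lia).
  unfold is_FQST; rewrite !split_sink; cbn [par flow T'].
  split; [|split; [|split; [|split; [|split; [|split]]]]].
  - intros u w Hu Hw E. rewrite !split_pos in E by assumption.
    destruct (Nat.eqb_spec u NN) as [->|]; destruct (Nat.eqb_spec w NN) as [->|]; auto.
    + exfalso. apply (Hx (if w =? S NN then NN else w)); [decide_eqb; lia | auto].
    + exfalso. apply (Hx (if u =? S NN then NN else u)); [decide_eqb; lia | auto].
    + apply Hinj in E; [revert E; decide_eqb; lia | decide_eqb; lia | decide_eqb; lia].
  - intros u Hu. destruct (Nat.eqb_spec u NN) as [->|]; [rewrite split_par_sink; lia|].
    destruct (split_par_cases u ltac:(lia)) as [[_ ->] | [[_ [_ [_ ->]]] | [_ [_ [_ ->]]]]];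
      [lia | lia|].
    destruct (Hpar u ltac:(lia)); lia.
  - intros u Hu. destruct (Nat.eqb_spec u NN) as [->|].
    + destruct (Hreach v Hv) as [k Hk]. destruct (split_reaches_sink k v Hv Hk) as [k' Hk'].
      exists (S k'). rewrite Nat.iter_succ_r, split_par_sink. exact Hk'.
    + destruct (Hreach u ltac:(lia)) as [k Hk]. apply (split_reaches_sink k); [lia | exact Hk].
  - intros u Hu. unfold split_flow. destruct (Nat.eqb_spec u NN).
    + pose proof (Hflow c1 Hc1); pose proof (Hflow c2 Hc2); lra.
    + apply Hflow; lia.
  - intros u Hu. rewrite split_flow_old, split_inflow by lia.
    decide_eqb; try lia. apply Hsrc; assumption.
  - intros u Hu. rewrite split_inflow. unfold split_flow.
    decide_eqb; try lia; [reflexivity | apply Hst; lia].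
  - rewrite split_inflow. decide_eqb; try lia. exact Hsink.
Qed.
Lemma split_cost :
  cost n z zBS T' = cost n z zBS T
  + flow T c1 * (sqdist (pos n z zBS T c1) x - sqdist (pos n z zBS T c1) (pos n z zBS T v))
  + flow T c2 * (sqdist (pos n z zBS T c2) x - sqdist (pos n z zBS T c2) (pos n z zBS T v))
  + (flow T c1 + flow T c2) * sqdist x (pos n z zBS T v).
Proof.
  set (P := pos n z zBS T).
  set (g := fun u => flow T u * (sqdist (P u) x - sqdist (P u) (P v))).
  change (cost n z zBS T') with (Rsum (seq 0 (sinkIdx n T'))
    (fun u => split_flow u * sqdist (pos n z zBS T' u) (pos n z zBS T' (split_par u)))).
  change (cost n z zBS T) with
    (Rsum (seq 0 NN) (fun u => flow T u * sqdist (P u) (P (par T u)))).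
  rewrite split_sink, seq_S, Rsum_app, Rsum_one, Nat.add_0_l, split_par_sink.
  rewrite (split_pos NN), (split_pos v), Nat.eqb_refl by lia.
  unfold split_flow at 2; rewrite Nat.eqb_refl.
  rewrite (Rsum_ext_seq NN _ (fun u => flow T u * sqdist (P u) (P (par T u))
             + (if u =? c1 then g u else 0) + (if u =? c2 then g u else 0))).
  - rewrite !Rsum_plus, !Rsum_delta_seq by assumption. unfold g.
    destruct (Nat.eqb_spec v NN); [lia|]. destruct (Nat.eqb_spec v (S NN)); [lia|].
    fold P; lra.
  - intros u Hu. rewrite split_flow_old, (split_pos u) by lia.
    destruct (split_par_cases u Hu) as [[[-> | ->] ->] | [[? [? [E ->]]] | [? [? [E ->]]]]];
      rewrite ?split_pos by lia; unfold g; rewrite ?Hp1, ?Hp2, ?E; decide_eqb;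
      try lia; fold P; lra.
Qed.
End Splitting.

Theorem mainTheorem8 (n : nat) (z : nat -> point) (zBS : point)
  (Hn : (1 <= n)%nat)
  (Hz : forall i j, (i < n)%nat -> (j < n)%nat -> z i = z j -> i = j)
  (Hbs : forall i, (i < n)%nat -> z i <> zBS)
  (T : FQST) (HT : is_MFQST n z zBS 3 T) :
  forall v, (n <= v < sinkIdx n T)%nat -> degree n T v = 3%nat.
Proof.
  intros v Hv. destruct HT as [HF [Hdeg Hmin]].
  destruct (Nat.eq_dec (degree n T v) 3) as [|Hne]; [assumption | exfalso].
  assert (Hcnt : (3 <= length (children n T v))%nat)
    by (specialize (Hdeg v Hv); unfold degree in *; lia).
  assert (Hv' : (v < sinkIdx n T)%nat) by lia.
  destruct (two_children_with_pull n z zBS T v HF Hv' Hcnt)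
    as (c1 & c2 & Hc1 & Hc2 & Hp1 & Hp2 & H12 & Hw).
  set (P := pos n z zBS T) in *.
  assert (Hsep : forall u, (u <= sinkIdx n T)%nat -> u <> v -> P u <> P v)
    by (intros u Hu Huv E; apply Huv; destruct HF as [Hinj _]; apply Hinj; [lia | lia | exact E]).
  assert (HF12 : 0 < flow T c1 + flow T c2)
    by (destruct HF as [_ [_ [_ [Hflow _]]]]; pose proof (Hflow c1 Hc1);
        pose proof (Hflow c2 Hc2); lra).
  destruct (fresh_shift P (sinkIdx n T) v _ _ Hsep Hw HF12) as (t & Ht & HtF & Hfresh).
  set (x := shift (P v) t (pull (flow T c1) (flow T c2) (P c1) (P c2) (P v))) in *.
  pose proof (Hmin _ (split_is_FQST n z zBS T v c1 c2 x HF Hv' Hc1 Hc2 Hp1 Hp2 H12 Hfresh)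
                 (split_steiner_degree n z zBS T v c1 c2 x HF Hv' Hc1 Hc2 Hp1 Hp2 H12 Hdeg Hcnt))
    as Hle.
  rewrite (split_cost n z zBS T v c1 c2 x HF Hv' Hc1 Hc2 Hp1 Hp2 H12) in Hle.
  pose proof (detour_saves (flow T c1) (flow T c2) (P c1) (P c2) (P v) t Hw Ht HtF).
  fold x in H; unfold P in H; lra.
Qed.
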